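(* Let $D$ be a squarefree integer and let $q>3$ be a prime dividing $D$. Then $H_D^{(q)}=\{kP : k\text{ odd and } x(kP)\equiv -18\pmod q\}$; in particular $H_D^{(q)}$ does not depend on $D$.
   Context: $C_D\subset\mathbb{P}^4$ is the curve over $\mathbb{Q}$ given by $X_0^2-2X_1^2+X_2^2=0$, $X_1^2-2X_2^2+DX_3^2=0$, $X_2^2-2DX_3^2+X_4^2=0$; $C_D(\mathbb{F}_q)$ denotes the $\mathbb{F}_q$-points of the variety defined by these equations reduced mod $q$. $E^{(1)}: y^2=x(x+2)(x+6)$, $P=(6,24)\in E^{(1)}(\mathbb{Q})$, $H=\{kP: k\text{ odd}\}$, and $\phi:C_D\to E^{(1)}$ is $\phi([x_0:\dots:x_4])=(6x_0^2/x_4^2,\,24x_0x_1x_2/x_4^3)$, with $\phi_q$ its reduction mod $q$. $\mathrm{red}_q:E^{(1)}(\mathbb{Q})\to E^{(1)}(\mathbb{F}_q)$ is reduction mod $q$, and $H_D^{(q)}:=\{R\in H : \mathrm{red}_q(R)\in\phi_q(C_D(\mathbb{F}_q))\}$. The condition $x(kP)\equiv-18\pmod q$ means the reduction of $kP$ has $x$-coordinate $-18\in\mathbb{F}_q$. *)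

From HB Require Import structures.
From mathcomp Require Import all_boot all_order all_algebra all_field.
Set Implicit Arguments. Unset Strict Implicit. Unset Printing Implicit Defensive.
Import Order.TTheory GRing.Theory Num.Theory.
Local Open Scope ring_scope.

(* Points of E^(1) : y^2 = x(x+2)(x+6) = x^3 + 8x^2 + 12x over a field K,
   in affine coordinates; [None] is the point at infinity O. *)
Definition ecpt (K : Type) := option (K * K).

Section EllipticGroupLaw.
Variable K : fieldType.

Definition E1_on (R : ecpt K) : bool :=
  if R is Some (x, y) then y ^+ 2 == x * (x + 2%:R) * (x + 6%:R) else true.

Definition E1_neg (R : ecpt K) : ecpt K :=
  if R is Some (x, y) then Some (x, - y) else None.

(* chord-and-tangent addition for y^2 = x^3 + a2 x^2 + a4 x, a2 = 8, a4 = 12 *)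
Definition E1_add (R S : ecpt K) : ecpt K :=
  match R, S with
  | None, _ => S
  | _, None => R
  | Some (x1, y1), Some (x2, y2) =>
      if (x1 == x2) && (y1 + y2 == 0) then None
      else
        let l := if x1 == x2
                 then (3%:R * x1 ^+ 2 + 16%:R * x1 + 12%:R) / (2%:R * y1)
                 else (y2 - y1) / (x2 - x1) in
        let x3 := l ^+ 2 - 8%:R - x1 - x2 in
        Some (x3, - (y1 + l * (x3 - x1)))
  end.

Fixpoint E1_muln (n : nat) (R : ecpt K) : ecpt K :=
  if n is n'.+1 then E1_add R (E1_muln n' R) else None.

Definition E1_mulz (k : int) (R : ecpt K) : ecpt K :=
  match k with
  | Posz n => E1_muln n R
  | Negz n => E1_neg (E1_muln n.+1 R)
  end.
End EllipticGroupLaw.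

Definition P1 : ecpt rat := Some (6%:R, 24%:R).

Definition inH (R : ecpt rat) : Prop :=
  exists k : int, ~~ (2 %| k)%Z /\ R = E1_mulz k P1.

(* reduction of a rational number mod q (meaningful when q does not divide
   the denominator) *)
Definition rat_red (q : nat) (r : rat) : 'F_q :=
  (numq r)%:~R / (denq r)%:~R.

Definition red (q : nat) (R : ecpt rat) : ecpt 'F_q :=
  match R with
  | None => None
  | Some (x, y) =>
      if ((q%:Z %| denq x)%Z || (q%:Z %| denq y)%Z) then None
      else Some (rat_red q x, rat_red q y)
  end.

Definition CD_eqs (q : nat) (D : int) (x0 x1 x2 x3 x4 : 'F_q) : bool :=
  [&& x0 ^+ 2 - 2%:R * x1 ^+ 2 + x2 ^+ 2 == 0,
      x1 ^+ 2 - 2%:R * x2 ^+ 2 + D%:~R * x3 ^+ 2 == 0 &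
      x2 ^+ 2 - 2%:R * D%:~R * x3 ^+ 2 + x4 ^+ 2 == 0].

(* Representatives of projective
   points are taken as vectors in F_q^5; the formula is homogeneous of
   degree 0, so the image does not depend on the representative. *)
Definition in_phi_image (q : nat) (D : int) (S : ecpt 'F_q) : Prop :=
  exists x0 x1 x2 x3 x4 : 'F_q,
    [/\ CD_eqs D x0 x1 x2 x3 x4, x4 != 0 &
        S = Some (6%:R * x0 ^+ 2 / x4 ^+ 2, 24%:R * x0 * x1 * x2 / x4 ^+ 3)].

Definition inHDq (D : int) (q : nat) (R : ecpt rat) : Prop :=
  inH R /\ in_phi_image D (red q R).

Definition squarefreez (D : int) : Prop :=
  D != 0 /\ forall p : nat, prime p -> ~~ ((p * p)%N %| `|D|)%N.

(* Odd multiples of P have x-coordinates in the 2-descent class (6, 2, 3),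
   i.e. x, x + 2 and x + 6 are 6, 2 and 3 times rational squares: this holds
   for P, and adding P along a chord multiplies the classes (the line through
   two points meets the cubic in a third one, whence x1 x2 x3 and its shifts
   are squares), sending (6, 2, 3) to (36, 4, 9) ~ (1, 1, 1) and back.
   Reducing such a point with x = -18 mod q gives -16 = 2 b^2 and -12 = 3 c^2
   in F_q, so -1 and 2 are squares mod q, which is what is needed to lift
   (-18, y) to a point of C_D(F_q) when q | D.  Conversely, for D = 0 mod q the
   equations of C_D force x0^2 = -3 x4^2, hence x = -18 on the image of
   phi_q.  Only D mod q enters, so H_D^(q) does not depend on D. *)

From HB Require Import structures.
From mathcomp Require Import all_boot all_order all_algebra all_field.
From mathcomp Require Import ring lra zify.
Import Order.TTheory GRing.Theory Num.Theory.
Set Implicit Arguments. Unset Strict Implicit.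
Local Open Scope ring_scope.

Section Chord.
Variable K : fieldType.

Definition fE (x : K) : K := x * (x + 2%:R) * (x + 6%:R).

Lemma fE_eq0 (x : K) : (fE x == 0) = [|| x == 0, x + 2%:R == 0 | x + 6%:R == 0].
Proof. by rewrite /fE !mulf_eq0 orbA. Qed.

Section Line.
Variables x1 y1 x2 y2 : K.
Hypotheses (on1 : y1 ^+ 2 = fE x1) (on2 : y2 ^+ 2 = fE x2) (x12 : x1 != x2).

Let l := (y2 - y1) / (x2 - x1).
Let b := y1 - l * x1.
Let x3 := l ^+ 2 - 8%:R - x1 - x2.

Lemma chord_factor (x : K) :
  fE x - (l * x + b) ^+ 2 = (x - x1) * (x - x2) * (x - x3).
Proof.
have nz21 : x2 - x1 != 0 by rewrite subr_eq0 eq_sym.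
set c1 := 12%:R - 2%:R * l * b - (x1 * x2 + x1 * x3 + x2 * x3).
set c0 := x1 * x2 * x3 - b ^+ 2.
(* the difference is at most linear since the cubic terms and (by the
   choice of x3) the quadratic terms cancel; it vanishes at x1 and x2 *)
have lin z : fE z - (l * z + b) ^+ 2 - (z - x1) * (z - x2) * (z - x3) = c1 * z + c0.
  by rewrite /fE /c1 /c0 /x3; ring.
have at1 : c1 * x1 + c0 = 0.
  by rewrite -lin (_ : l * x1 + b = y1) -?on1; [ring | rewrite /b; ring].
have at2 : c1 * x2 + c0 = 0.
  rewrite -lin (_ : l * x2 + b = y2) -?on2; first ring.
  by rewrite /b /l; field.
have c1_0 : c1 = 0.
  have : c1 * (x2 - x1) = 0.
    rewrite (_ : c1 * _ = (c1 * x2 + c0) - (c1 * x1 + c0)); last by ring.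
    by rewrite at1 at2 subrr.
  by move/eqP; rewrite mulf_eq0 (negPf nz21) orbF => /eqP.
have c0_0 : c0 = 0 by move: at1; rewrite c1_0 mul0r add0r.
by have /eqP := lin x; rewrite c1_0 c0_0 mul0r addr0 subr_eq0 => /eqP.
Qed.

Lemma E1_add_chord :
  [/\ E1_add (Some (x1, y1)) (Some (x2, y2)) = Some (x3, - (y1 + l * (x3 - x1))),
      (- (y1 + l * (x3 - x1))) ^+ 2 = fE x3,
      x1 * x2 * x3 = b ^+ 2,
      (x1 + 2%:R) * (x2 + 2%:R) * (x3 + 2%:R) = (b - 2%:R * l) ^+ 2 &
      (x1 + 6%:R) * (x2 + 6%:R) * (x3 + 6%:R) = (b - 6%:R * l) ^+ 2].
Proof.
have at_pt z : fE z - (l * z + b) ^+ 2 - (z - x1) * (z - x2) * (z - x3) = 0.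
  by rewrite chord_factor subrr.
split.
- by rewrite /= (negPf x12).
- rewrite -[RHS]subr0 -(at_pt x3) /b; ring.
- rewrite -[LHS]subr0 -(at_pt 0) /fE; ring.
- rewrite -[LHS]subr0 -(at_pt (- 2%:R)) /fE; ring.
- rewrite -[LHS]subr0 -(at_pt (- 6%:R)) /fE; ring.
Qed.

End Line.
End Chord.

Lemma sqr_rat_neq_prime (p : nat) (r : rat) : prime p -> r ^+ 2 != p%:R.
Proof.
move=> p_pr; apply/eqP => r2p.
have numE : numq r ^+ 2 = p%:Z * denq r ^+ 2.
  apply: (@intr_inj rat); rewrite rmorphXn /= intrM rmorphXn /=.
  by rewrite numqE exprMn r2p.
have absE : (`|numq r| ^ 2 = p * `|denq r| ^ 2)%N.
  by have := congr1 absz numE; rewrite abszX abszM abszX.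
(* the p-adic valuation is even on the left and odd on the right *)
have := congr1 (logn p) absE.
rewrite lognM ?(prime_gt0 p_pr) ?expn_gt0 ?absz_gt0 ?denq_neq0 //.
by rewrite !lognX (logn_prime _ p_pr) eqxx; lia.
Qed.

(* The 2-descent map: [x] is sent to the classes of [x], [x + 2] and [x + 6]
   in Q*/Q*^2. *)
Definition sqclass (u v w x : rat) : Prop :=
  exists a b c, [/\ x = u * a ^+ 2, x + 2%:R = v * b ^+ 2 & x + 6%:R = w * c ^+ 2].

Lemma sqclass_scale (u v w s t r x : rat) :
  sqclass (u * s ^+ 2) (v * t ^+ 2) (w * r ^+ 2) x -> sqclass u v w x.
Proof.
case=> a [b [c [ha hb hc]]]; exists (s * a), (t * b), (r * c).
by split; [rewrite ha | rewrite hb | rewrite hc]; ring.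
Qed.

Lemma sq_class_of_prod (u1 u2 a1 a2 s z1 z2 z3 : rat) :
  z1 = u1 * a1 ^+ 2 -> z2 = u2 * a2 ^+ 2 -> z1 != 0 -> z2 != 0 ->
  z1 * z2 * z3 = s ^+ 2 -> exists a3, z3 = u1 * u2 * a3 ^+ 2.
Proof.
move=> h1 h2 nz1 nz2 prod.
exists (s / (u1 * a1 * (u2 * a2))).
have -> : z3 = s ^+ 2 / (z1 * z2) by rewrite -prod; field; rewrite nz1 nz2.
move: nz1 nz2; rewrite h1 h2 !mulf_eq0 !negb_or.
move=> /and3P[u1_0 a1_0 _] /and3P[u2_0 a2_0 _].
by field; rewrite u1_0 a1_0 u2_0 a2_0.
Qed.

Lemma sqclass_chord (u1 v1 w1 u2 v2 w2 x1 x2 x3 s t r : rat) :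
  sqclass u1 v1 w1 x1 -> sqclass u2 v2 w2 x2 -> fE x1 != 0 -> fE x2 != 0 ->
  x1 * x2 * x3 = s ^+ 2 ->
  (x1 + 2%:R) * (x2 + 2%:R) * (x3 + 2%:R) = t ^+ 2 ->
  (x1 + 6%:R) * (x2 + 6%:R) * (x3 + 6%:R) = r ^+ 2 ->
  sqclass (u1 * u2) (v1 * v2) (w1 * w2) x3.
Proof.
move=> [a1 [b1 [c1 [ha1 hb1 hc1]]]] [a2 [b2 [c2 [ha2 hb2 hc2]]]].
rewrite fE_eq0 => /norP[nz1 /norP[nz1' nz1'']].
rewrite fE_eq0 => /norP[nz2 /norP[nz2' nz2'']] e0 e2 e6.
have [a3 ha3] := sq_class_of_prod ha1 ha2 nz1 nz2 e0.
have [b3 hb3] := sq_class_of_prod hb1 hb2 nz1' nz2' e2.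
have [c3 hc3] := sq_class_of_prod hc1 hc2 nz1'' nz2'' e6.
by exists a3, b3, c3.
Qed.

Lemma sqclass_ge0 (u v w x : rat) : 0 <= u -> sqclass u v w x -> 0 <= x.
Proof. by move=> u_ge0 [a [_ [_ [-> _ _]]]]; rewrite mulr_ge0 ?sqr_ge0. Qed.

Lemma sqclass623_fE_neq0 (x : rat) : sqclass 6%:R 2%:R 3%:R x -> fE x != 0.
Proof.
move=> cx; have x_ge0 := sqclass_ge0 (ler0n _ 6) cx.
case: cx => a [b [c [_ _ hc]]].
rewrite fE_eq0; apply/or3P; case=> /eqP x0; last 2 first; [lra | lra |].
have : c ^+ 2 = 2%:R by apply: (@mulfI _ 3%:R) => //; rewrite -hc x0; ring.
by apply/eqP; rewrite sqr_rat_neq_prime.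
Qed.

Lemma sqclass111_fE_neq0 (x : rat) : sqclass 1 1 1 x -> fE x != 0.
Proof.
move=> cx; have x_ge0 := sqclass_ge0 ler01 cx.
case: cx => a [b [c [_ hb _]]].
rewrite fE_eq0; apply/or3P; case=> /eqP x0; last 2 first; [lra | lra |].
have : b ^+ 2 = 2%:R by rewrite -[LHS]mul1r -hb x0 add0r.
by apply/eqP; rewrite sqr_rat_neq_prime.
Qed.

Lemma sqclass623_not111 (x : rat) : sqclass 6%:R 2%:R 3%:R x -> ~ sqclass 1 1 1 x.
Proof.
move=> c6 c1; have := sqclass623_fE_neq0 c6.
case: c6 => _ [_ [c [_ _ hc]]]; case: c1 => _ [_ [c' [_ _ hc']]].
rewrite fE_eq0 => /norP[_ /norP[_ x6]].
have c0 : c != 0 by apply: contraNneq x6 => c0; rewrite hc c0 expr0n mulr0.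
have /negP[] := sqr_rat_neq_prime (c' / c) (isT : prime 3).
by rewrite expr_div_n -[c' ^+ 2]mul1r -hc' hc; apply/eqP; field.
Qed.

Definition E1_class (u v w : rat) (R : ecpt rat) : Prop :=
  exists x y, [/\ R = Some (x, y), y ^+ 2 = fE x & sqclass u v w x].

Lemma E1_class_add (u1 v1 w1 u2 v2 w2 x1 y1 x2 y2 : rat) :
  y1 ^+ 2 = fE x1 -> y2 ^+ 2 = fE x2 -> x1 != x2 ->
  sqclass u1 v1 w1 x1 -> sqclass u2 v2 w2 x2 -> fE x1 != 0 -> fE x2 != 0 ->
  E1_class (u1 * u2) (v1 * v2) (w1 * w2) (E1_add (Some (x1, y1)) (Some (x2, y2))).
Proof.
move=> on1 on2 x12 c1 c2 nz1 nz2.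
have [-> on3 e0 e2 e6] := E1_add_chord on1 on2 x12.
by do 2 eexists; split; [reflexivity | exact: on3 | exact: sqclass_chord e0 e2 e6].
Qed.

Lemma P1_on : (24%:R : rat) ^+ 2 = fE 6%:R.
Proof. by rewrite /fE; ring. Qed.

Lemma sqclass623_6 : sqclass 6%:R 2%:R 3%:R 6%:R.
Proof. by exists 1, 2%:R, 2%:R; split; ring. Qed.

Lemma E1_add_P1_class111 (R : ecpt rat) :
  E1_class 1 1 1 R -> E1_class 6%:R 2%:R 3%:R (E1_add P1 R).
Proof.
move=> [x [y [-> on_xy cx]]].
have x_neq6 : 6%:R != x.
  by apply: contraPneq (sqclass623_not111 sqclass623_6) => ->.
have := E1_class_add P1_on on_xy x_neq6 sqclass623_6 cx
  (sqclass623_fE_neq0 sqclass623_6) (sqclass111_fE_neq0 cx).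
by rewrite !mulr1.
Qed.

Lemma E1_add_P1_class623 (R : ecpt rat) :
  E1_class 6%:R 2%:R 3%:R R -> E1_add P1 R = None \/ E1_class 1 1 1 (E1_add P1 R).
Proof.
move=> [x [y [-> on_xy cx]]].
have [x6 | x_neq6] := eqVneq 6%:R x; last first.
  right; have := E1_class_add P1_on on_xy x_neq6 sqclass623_6 cx
    (sqclass623_fE_neq0 sqclass623_6) (sqclass623_fE_neq0 cx).
  case=> x3 [y3 [-> on3 c3]]; exists x3, y3; split => //.
  apply: (@sqclass_scale _ _ _ 6%:R 2%:R 3%:R).
  by rewrite !mul1r !expr2.
subst x; have : (y - 24%:R) * (y + 24%:R) = 0.
  by rewrite -subr_sqr on_xy /fE; ring.
move/eqP; rewrite mulf_eq0 subr_eq0 addr_eq0 => /orP[] /eqP ->; last first.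
  by left; rewrite /P1 /E1_add eqxx subrr eqxx.
right; exists 4%:R^-1, (15%:R / 8%:R); split.
- rewrite /P1 /E1_add eqxx (_ : 24%:R + 24%:R == 0 = false); last first.
    by rewrite -natrD pnatr_eq0.
  by congr (Some (_, _)); field.
- by rewrite /fE; field.
- by exists 2%:R^-1, (3%:R / 2%:R), (5%:R / 2%:R); split; field.
Qed.

Lemma E1_muln_P1_class (n : nat) :
  if odd n then E1_class 6%:R 2%:R 3%:R (E1_muln n P1)
  else E1_muln n P1 = None \/ E1_class 1 1 1 (E1_muln n P1).
Proof.
elim: n => [|n IHn] /=; first by left.
case: (odd n) IHn => [/E1_add_P1_class623 // | [-> | /E1_add_P1_class111 //]].
by exists 6%:R, 24%:R; split; [| exact: P1_on | exact: sqclass623_6].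
Qed.

Lemma E1_mulz_P1_class (k : int) :
  ~~ (2 %| k)%Z -> E1_class 6%:R 2%:R 3%:R (E1_mulz k P1).
Proof.
case: k => n; rewrite dvdzE dvdn2 negbK => n_odd.
  by have := E1_muln_P1_class n; rewrite (n_odd : odd n).
have := E1_muln_P1_class n.+1; rewrite (n_odd : odd n.+1).
move=> -[x [y [nP on_xy cx]]].
by exists x, (- y); rewrite /E1_mulz nP sqrrN.
Qed.

Definition qint (q : nat) (r : rat) : bool := ~~ (q%:Z %| denq r)%Z.

Section Reduction.
Variable q : nat.
Hypothesis q_pr : prime q.
Local Notation F := 'F_q.

Lemma Fp_intr_eq0 (z : int) : (z%:~R == 0 :> F) = (q%:Z %| z)%Z.
Proof. by rewrite (dvdz_pcharf (pchar_Fp q_pr)). Qed.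

Lemma qintE (r : rat) : qint q r = ((denq r)%:~R != 0 :> F).
Proof. by rewrite /qint Fp_intr_eq0. Qed.

Lemma Fp_numq_eq0_qint (r : rat) : (numq r)%:~R = 0 :> F -> qint q r.
Proof.
move=> /eqP; rewrite Fp_intr_eq0 /qint !dvdzE => q_num; apply/negP => q_den.
have /eqP gcd1 := coprime_num_den r.
have : (q %| 1)%N by rewrite -gcd1 dvdn_gcd q_num q_den.
by rewrite dvdn1 => /eqP q1; move: q_pr; rewrite q1.
Qed.

Lemma rat_red_frac (r : rat) (n d : int) :
  (d%:~R != 0 :> F) -> r * d%:~R = n%:~R -> qint q r /\ rat_red q r = n%:~R / d%:~R.
Proof.
move=> d_neq0 rdn.
have /(congr1 (fun z : int => z%:~R : F)) : numq r * d = n * denq r.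
  by apply: (@intr_inj rat); rewrite !intrM numqE -rdn; ring.
rewrite !intrM => numE.
have r_qint : qint q r.
  rewrite qintE; apply/negP => /eqP den0; move: numE; rewrite den0 mulr0.
  move=> /eqP; rewrite mulf_eq0 (negPf d_neq0) orbF => /eqP /Fp_numq_eq0_qint.
  by rewrite qintE den0 eqxx.
split=> //; move: r_qint; rewrite qintE => den_neq0.
by apply/eqP; rewrite /rat_red eqr_div // numE.
Qed.

Lemma rat_red_nat (n : nat) : qint q n%:R /\ rat_red q n%:R = n%:R.
Proof.
have [-> ->] := @rat_red_frac n%:R n 1 (oner_neq0 _) (mulr1 _).
by rewrite divr1.
Qed.

Section Ring.
Variables r s : rat.
Hypotheses (r_qint : qint q r) (s_qint : qint q s).

Let rD : (denq r)%:~R != 0 :> F. Proof. by rewrite -qintE. Qed.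
Let sD : (denq s)%:~R != 0 :> F. Proof. by rewrite -qintE. Qed.
Let dD : (denq r * denq s)%:~R != 0 :> F. Proof. by rewrite intrM mulf_neq0. Qed.

Lemma rat_redM : qint q (r * s) /\ rat_red q (r * s) = rat_red q r * rat_red q s.
Proof.
have frac : r * s * (denq r * denq s)%:~R = (numq r * numq s)%:~R.
  by rewrite !intrM !numqE; ring.
have [-> ->] := rat_red_frac dD frac.
by split=> //; rewrite /rat_red !intrM; field; rewrite rD sD.
Qed.

Lemma rat_redD : qint q (r + s) /\ rat_red q (r + s) = rat_red q r + rat_red q s.
Proof.
have frac : (r + s) * (denq r * denq s)%:~R = (numq r * denq s + numq s * denq r)%:~R.
  by rewrite !(intrM, intrD) !numqE; ring.
have [-> ->] := rat_red_frac dD frac.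
by split=> //; rewrite /rat_red !(intrM, intrD); field; rewrite rD sD.
Qed.

End Ring.

Lemma qint_sqr (c : nat) (a : rat) :
  qint q (c%:R * a ^+ 2) -> (c%:R != 0 :> F) -> qint q a.
Proof.
set s := c%:R * a ^+ 2 => s_qint c_neq0; rewrite qintE; apply/negP => /eqP Da0.
have /(congr1 (fun z : int => z%:~R : F)) :
    numq s * denq a ^+ 2 = c%:Z * numq a ^+ 2 * denq s.
  apply: (@intr_inj rat); rewrite !(intrM, rmorphXn) /= !numqE /s -pmulrn; ring.
have Ds_neq0 : (denq s)%:~R != 0 :> F by rewrite -qintE.
rewrite !intrM Da0 !(mul0r, mulr0) -pmulrn => /esym /eqP.
rewrite !mulf_eq0 (negPf c_neq0) (negPf Ds_neq0) orbb orbF /= => /eqP.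
by move/Fp_numq_eq0_qint; rewrite qintE Da0 eqxx.
Qed.

Lemma rat_red_addn (x : rat) (t : nat) :
  qint q x -> qint q (x + t%:R) /\ rat_red q (x + t%:R) = rat_red q x + t%:R.
Proof.
move=> x_qint; have [t_qint t_red] := rat_red_nat t.
by have [-> ->] := rat_redD x_qint t_qint; rewrite t_red.
Qed.

Lemma rat_red_sqr_rel (x a : rat) (t c : nat) :
  qint q x -> (c%:R != 0 :> F) -> x + t%:R = c%:R * a ^+ 2 ->
  rat_red q x + t%:R = c%:R * rat_red q a ^+ 2.
Proof.
move=> x_qint c_neq0 rel.
have [xt_qint xt_red] := rat_red_addn t x_qint.
have a_qint : qint q a by apply: (@qint_sqr c) => //; rewrite -rel.
have [c_qint c_red] := rat_red_nat c.
have [a2_qint a2_red] := rat_redM a_qint a_qint.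
have [_ ca2_red] := rat_redM c_qint a2_qint.
by rewrite -xt_red rel expr2 ca2_red a2_red c_red.
Qed.

Lemma rat_red_fE (x y : rat) : qint q x -> qint q y -> y ^+ 2 = fE x ->
  rat_red q y ^+ 2 = fE (rat_red q x).
Proof.
move=> x_qint y_qint on_xy.
have [x2_qint x2_red] := rat_red_addn 2 x_qint.
have [x6_qint x6_red] := rat_red_addn 6 x_qint.
have [xx2_qint xx2_red] := rat_redM x_qint x2_qint.
have [_ fE_red] := rat_redM xx2_qint x6_qint.
have [_ y2_red] := rat_redM y_qint y_qint.
by rewrite /fE -x2_red -x6_red -xx2_red -fE_red expr2 -y2_red -expr2 on_xy.
Qed.

End Reduction.

Lemma sqrtN1_sqrt2_of_m18 (K : fieldType) (x b c : K) :
  2%:R != 0 :> K -> 3%:R != 0 :> K -> x = - 18%:R ->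
  x + 2%:R = 2%:R * b ^+ 2 -> x + 6%:R = 3%:R * c ^+ 2 ->
  exists i s2 : K, i ^+ 2 = - 1 /\ s2 ^+ 2 = 2%:R.
Proof.
move=> two_neq0 three_neq0 -> hb hc.
have b2 : b ^+ 2 = - 8%:R by apply: (mulfI two_neq0); rewrite -hb; ring.
have c2 : c ^+ 2 = - 4%:R by apply: (mulfI three_neq0); rewrite -hc; ring.
have four_neq0 : 4%:R != 0 :> K by rewrite (natrM _ 2 2) mulf_neq0.
have c_neq0 : c != 0.
  by apply: contra_neq four_neq0 => c0; apply/oppr_inj; rewrite -c2 c0 expr0n oppr0.
exists (c / 2%:R), (b / c); rewrite !expr_div_n b2 c2; split; field=> //.
by rewrite oppr_eq0.
Qed.

Lemma in_phi_image_eqD (q : nat) (D D' : int) (S : ecpt 'F_q) :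
  D%:~R = D'%:~R :> 'F_q -> in_phi_image D S <-> in_phi_image D' S.
Proof. by rewrite /in_phi_image /CD_eqs => ->. Qed.

Section PhiImage.
Variables (q : nat) (D : int).
Hypotheses (q_pr : prime q) (q_gt3 : (3 < q)%N) (D_eq0 : D%:~R = 0 :> 'F_q).
Local Notation F := 'F_q.

Lemma Fp_natr_neq0 (n : nat) : (0 < n < q)%N -> n%:R != 0 :> F.
Proof.
case/andP=> n_gt0 n_ltq; apply/negP.
by rewrite -(dvdn_pcharf (pchar_Fp q_pr)) => /(dvdn_leq n_gt0); rewrite leqNgt n_ltq.
Qed.

Lemma Fp2_neq0 : 2%:R != 0 :> F.
Proof. by apply: Fp_natr_neq0; lia. Qed.

Lemma Fp3_neq0 : 3%:R != 0 :> F.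
Proof. by apply: Fp_natr_neq0; lia. Qed.

Lemma Fp_natr23_neq0 (a b : nat) : (2 ^ a * 3 ^ b)%:R != 0 :> F.
Proof. by rewrite natrM !natrX mulf_neq0 ?expf_neq0 ?Fp2_neq0 ?Fp3_neq0. Qed.

(* With D = 0 the equations of C_D force x0^2 = 3 x2^2 = -3 x4^2. *)
Lemma in_phi_image_x (S : ecpt F) :
  in_phi_image D S -> exists y, S = Some (- 18%:R, y).
Proof.
case=> [x0 [x1 [x2 [x3 [x4 [eqs x4_neq0 ->]]]]]]; eexists; congr (Some (_, _)).
move: eqs; rewrite /CD_eqs D_eq0 => /and3P[/eqP e1 /eqP e2 /eqP e3].
have -> : x0 ^+ 2 = - 3%:R * x4 ^+ 2.
  rewrite -[LHS]subr0 -[X in _ - X](_ : x0 ^+ 2 - 2%:R * x1 ^+ 2 + x2 ^+ 2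
    + 2%:R * (x1 ^+ 2 - 2%:R * x2 ^+ 2 + 0 * x3 ^+ 2)
    + 3%:R * (x2 ^+ 2 - 2%:R * 0 * x3 ^+ 2 + x4 ^+ 2) = 0).
    by ring.
  by rewrite e1 e2 e3; ring.
by field.
Qed.

Lemma in_phi_image_m18 (y i s2 : F) :
  i ^+ 2 = - 1 -> s2 ^+ 2 = 2%:R -> y ^+ 2 = fE (- 18%:R) ->
  in_phi_image D (Some (- 18%:R, y)).
Proof.
move=> i2 s22 y2.
have i_neq0 : i != 0.
  by apply: contra_eq_neq i2 => ->; rewrite expr0n eq_sym oppr_eq0 oner_neq0.
have s2_neq0 : s2 != 0.
  by apply: contra_eq_neq s22 => ->; rewrite expr0n eq_sym Fp2_neq0.
(* the image of [x0 : s2 : 1 : 0 : i] has y-coordinate -24 x0 s2 i, and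
   x0^2 = 3 follows from the curve equation for y *)
set x0 := - y * i / (24%:R * s2).
have x02 : x0 ^+ 2 = 3%:R.
  rewrite /x0 expr_div_n exprMn sqrrN y2 i2 exprMn s22 /fE.
  by field; exact: (Fp_natr23_neq0 7 2).
exists x0, s2, 1, 0, i; split=> //.
  by rewrite /CD_eqs D_eq0 x02 s22 i2; apply/and3P; split; apply/eqP; ring.
congr (Some (_, _)); first by rewrite x02 i2; field; rewrite oppr_eq0 oner_eq0.
have -> : i ^+ 3 = - i by rewrite exprSr i2 mulN1r.
rewrite /x0.
by field; rewrite oppr_eq0 i_neq0 s2_neq0 (Fp_natr23_neq0 3 1).
Qed.

Lemma red_E1_class623_phi_image (R : ecpt rat) (y : F) :
  E1_class 6%:R 2%:R 3%:R R -> red q R = Some (- 18%:R, y) -> in_phi_image D (red q R).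
Proof.
move=> [x [y0 [-> on_xy [a [b [c [_ hb hc]]]]]]] red_xy; rewrite red_xy.
move: red_xy; rewrite /red; case: ifP => // /norP[x_qint y0_qint].
move=> /Some_inj/pair_equal_spec[x_red y0_red].
have [i [s2 [i2 s22]]] := sqrtN1_sqrt2_of_m18 Fp2_neq0 Fp3_neq0 x_red
  (rat_red_sqr_rel q_pr x_qint Fp2_neq0 hb) (rat_red_sqr_rel q_pr x_qint Fp3_neq0 hc).
apply: in_phi_image_m18 i2 s22 _.
by rewrite -x_red -y0_red (rat_red_fE q_pr x_qint y0_qint on_xy).
Qed.

End PhiImage.

Theorem proposition6p2 (D : int) (q : nat) :
  squarefreez D -> prime q -> (3 < q)%N -> (q%:Z %| D)%Z ->
  (forall R : ecpt rat,
     inHDq D q R <->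
     exists k : int, [/\ ~~ (2 %| k)%Z, R = E1_mulz k P1 &
        exists y : 'F_q, red q (E1_mulz k P1) = Some (- 18%:R, y)])
  /\ (forall D' : int, squarefreez D' -> (q%:Z %| D')%Z ->
        forall R : ecpt rat, inHDq D q R <-> inHDq D' q R).
Proof.
move=> _ q_pr q_gt3 q_dvdD.
have D_eq0 : D%:~R = 0 :> 'F_q by apply/eqP; rewrite (Fp_intr_eq0 q_pr).
split=> [R | D' _ q_dvdD' R].
  split=> [[[k [k_odd ->]] /(in_phi_image_x D_eq0) red_k] | [k [k_odd -> [y red_k]]]].
    by exists k.
  split; first by exists k.
  exact: (red_E1_class623_phi_image q_pr q_gt3 D_eq0 (E1_mulz_P1_class k_odd) red_k).
have D'_eq0 : D'%:~R = 0 :> 'F_q by apply/eqP; rewrite (Fp_intr_eq0 q_pr).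
have eqD := in_phi_image_eqD (red q R) (etrans D_eq0 (esym D'_eq0)).
by split=> -[inH_R phi_R]; split=> //; apply/eqD.
Qed.
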